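(* If $(G_1,\sigma_1),\dots,(G_k,\sigma_k)$ are signed graphs, then $\chi_s((G_1,\sigma_1)\,\square\cdots\square\,(G_k,\sigma_k))\le\prod_{i=1}^k\chi_s(G_i,\sigma_i)$.
   Context: A signed graph $(G,\sigma)$ is a simple loopless undirected graph with a signature $\sigma:E(G)\to\{+1,-1\}$. Switching a vertex negates the signs of its incident edges; two signatures are equivalent if one is obtained from the other by switching a set of vertices. A homomorphism of $(G,\sigma)$ to $(H,\pi)$ is a graph homomorphism $\varphi:G\to H$ for which there is a signature $\sigma'$ equivalent to $\sigma$ with $\pi(\varphi(u)\varphi(v))=\sigma'(uv)$ for every edge $uv$; $\chi_s(G,\sigma)$ is the smallest order of a signed graph to which $(G,\sigma)$ admits a homomorphism. The Cartesian product $(G,\sigma)\,\square\,(H,\pi)$ is the signed graph on $G\,\square\,H$ where $(u,v_1)(u,v_2)$ has sign $\pi(v_1v_2)$ and $(u_1,v)(u_2,v)$ has sign $\sigma(u_1u_2)$. *)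

From mathcomp Require Import all_boot.
From Stdlib Require Import ClassicalEpsilon.

Set Implicit Arguments.
Unset Strict Implicit.
Unset Printing Implicit Defensive.

(* A signed graph: a finite simple loopless undirected graph (sadj symmetric,
   irreflexive) together with a signature on its edges.  [ssign u v = true]
   means the edge uv is negative (sign -1), [false] means positive (+1).
   Only the values of ssign on edges are relevant. *)
Record sgraph := SGraph {
  sv :> finType;
  sadj : rel sv;
  ssign : rel sv;
  sadj_sym : symmetric sadj;
  sadj_irr : irreflexive sadj;
  ssign_sym : symmetric ssign
}.

(* Homomorphism (G,sigma) -> (H,pi): a graph homomorphism phi together with a
   switching set S of V(G) such that the switched signature sigma' agrees with
   pi(phi u phi v) on every edge uv. *)
Definition is_shom (G H : sgraph) (phi : G -> H) : Prop :=
  (forall u v, sadj u v -> sadj (phi u) (phi v)) /\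
  exists S : {set G}, forall u v, sadj u v ->
    ssign (phi u) (phi v) = (ssign u v (+) (u \in S) (+) (v \in S)).

Definition shom_exists (G H : sgraph) : Prop := exists phi : G -> H, is_shom phi.

Definition asb (P : Prop) : bool :=
  if excluded_middle_informative P then true else false.

Lemma asbP (P : Prop) : reflect P (asb P).
Proof. by rewrite /asb; case: excluded_middle_informative => h; constructor. Qed.

Definition maps_to_order (G : sgraph) (n : nat) : bool :=
  asb (exists H : sgraph, #|H| = n /\ shom_exists G H).

Lemma maps_to_order_ex (G : sgraph) : exists n, maps_to_order G n.
Proof.
exists #|G|; apply/asbP; exists G; split => //.
exists id; split => // ; by exists set0 => u v _; rewrite !inE !addbF.
Qed.

Definition chi_s (G : sgraph) : nat := ex_minn (maps_to_order_ex G).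

Section Prod.
Variables G H : sgraph.
Definition prod_adj : rel (G * H) := fun x y =>
  ((x.1 == y.1) && sadj x.2 y.2) || ((x.2 == y.2) && sadj x.1 y.1).
Definition prod_sign : rel (G * H) := fun x y =>
  if x.1 == y.1 then ssign x.2 y.2 else ssign x.1 y.1.
Lemma prod_adj_sym : symmetric prod_adj.
Proof. by move=> x y; rewrite /prod_adj (eq_sym x.1) (eq_sym x.2) sadj_sym (sadj_sym x.1). Qed.
Lemma prod_adj_irr : irreflexive prod_adj.
Proof. by move=> x; rewrite /prod_adj !sadj_irr !andbF. Qed.
Lemma prod_sign_sym : symmetric prod_sign.
Proof. by move=> x y; rewrite /prod_sign (eq_sym x.1) ssign_sym (ssign_sym x.1). Qed.
Definition sprod : sgraph :=
  @SGraph (G * H)%type prod_adj prod_sign prod_adj_sym prod_adj_irr prod_sign_sym.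
End Prod.

Definition sprod_list (G1 : sgraph) (Gs : seq sgraph) : sgraph := foldl sprod G1 Gs.

(* A homomorphism of each factor to a target of minimum order induces, coordinatewise, a
   homomorphism of the Cartesian product to the product of the targets: on an edge of the
   product only one coordinate moves, and switching at (x, y) exactly when x is switched
   in the first factor xor y is switched in the second reproduces the required signs. *)
From mathcomp Require Import all_boot.

Set Implicit Arguments.
Unset Strict Implicit.
Unset Printing Implicit Defensive.

Lemma chi_s_attained (G : sgraph) :
  exists H : sgraph, #|H| = chi_s G /\ shom_exists G H.
Proof. by rewrite /chi_s; case: ex_minnP => m /asbP. Qed.

Lemma chi_s_le_card (G H : sgraph) : shom_exists G H -> chi_s G <= #|H|.
Proof. by move=> hom; rewrite /chi_s; case: ex_minnP => m _; apply; apply/asbP; exists H. Qed.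

Lemma adj_hom_neq (G H : sgraph) (phi : G -> H) (u v : G) :
  (forall x y, sadj x y -> sadj (phi x) (phi y)) -> sadj u v -> phi u != phi v.
Proof. by move=> hom /hom; apply: contraTneq => ->; rewrite sadj_irr. Qed.

Section ProductHomomorphism.

Variables (G1 G2 H1 H2 : sgraph) (phi1 : G1 -> H1) (phi2 : G2 -> H2).
Hypotheses (hom1 : is_shom phi1) (hom2 : is_shom phi2).

Definition prod_map (x : sprod G1 G2) : sprod H1 H2 := (phi1 x.1, phi2 x.2).

Lemma prod_map_adj (x y : sprod G1 G2) :
  sadj x y -> sadj (prod_map x) (prod_map y).
Proof.
case: hom1 hom2 => [adj1 _] [adj2 _].
case: x y => [u1 u2] [v1 v2]; rewrite /prod_map /= /prod_adj /=.
case/orP=> /andP[/eqP-> uv]; first by rewrite eqxx adj2.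
by rewrite eqxx adj1 ?orbT.
Qed.

Lemma prod_map_shom : is_shom prod_map.
Proof.
split; first exact: prod_map_adj.
case: hom1 hom2 => [adj1 [S1 sign1]] [adj2 [S2 sign2]].
exists [set x : sprod G1 G2 | (x.1 \in S1) (+) (x.2 \in S2)].
case=> [u1 u2] [v1 v2]; rewrite /prod_map /= /prod_adj /prod_sign /= !inE /=.
have [<-|_] := eqVneq u1 v1.
  rewrite sadj_irr andbF orbF eqxx => u2v2; rewrite sign2 //.
  by case: (u1 \in S1); case: (u2 \in S2); case: (v2 \in S2); case: ssign.
case/andP=> /eqP<- u1v1; rewrite (negbTE (adj_hom_neq adj1 u1v1)) sign1 //.
by case: (u2 \in S2); case: (u1 \in S1); case: (v1 \in S1); case: ssign.
Qed.

End ProductHomomorphism.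

Lemma shom_exists_sprod (G1 G2 H1 H2 : sgraph) :
  shom_exists G1 H1 -> shom_exists G2 H2 -> shom_exists (sprod G1 G2) (sprod H1 H2).
Proof. by move=> [phi1 hom1] [phi2 hom2]; exists (prod_map phi1 phi2); apply: prod_map_shom. Qed.

Lemma chi_s_sprod (G1 G2 : sgraph) : chi_s (sprod G1 G2) <= chi_s G1 * chi_s G2.
Proof.
have [H1 [<- hom1]] := chi_s_attained G1.
have [H2 [<- hom2]] := chi_s_attained G2.
by rewrite -card_prod; apply: chi_s_le_card (shom_exists_sprod hom1 hom2).
Qed.

Theorem corollary5p4 (G1 : sgraph) (Gs : seq sgraph) :
  chi_s (sprod_list G1 Gs) <= chi_s G1 * \prod_(G <- Gs) chi_s G.
Proof.
elim: Gs G1 => [|G Gs IH] G1; first by rewrite big_nil muln1.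
rewrite big_cons mulnA; apply: leq_trans (IH (sprod G1 G)) _.
by rewrite leq_mul2r chi_s_sprod orbT.
Qed.
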